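(* Let $K$ be a positive integer dividing $T$ and let $\epsilon,\delta,\alpha>0$. Consider the sequence $\{\widetilde{\mathbf y}_{m}\}$ produced by Algorithm DPP (described in the context) with these parameters. Fix an interval $[s,e]$, $1\le s<e\le T$, and suppose $\widehat{\mathcal K}_{s,e}:=\{\mathbf x\in\mathcal K:\ g_t(\mathbf x)\le0\ \forall t\in[s,e]\}\neq\emptyset$. Then $$\sum_{t=s}^{e}f_t(\widetilde{\mathbf y}_{m(t)})-\min_{\mathbf x\in\widehat{\mathcal K}_{s,e}}\sum_{t=s}^{e}f_t(\mathbf x)\le 2KR(2G_f+R\alpha)+\frac{G_f^2}{2\alpha}T,$$ and for every $c>0$, $$\sum_{t=s}^{e}g_t^+(\widetilde{\mathbf y}_{m(t)})\le\frac{G_g^2}{2c}T+2cR\Big(\frac{G_fT}{\alpha}+RK\Big)+\frac{2\alpha R^2}{\delta}+\Big(\frac{G_f}{\alpha}+4R\Big)\frac{G_fT}{2\delta K}+4KRG_g.$$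
   Context: Let $\mathcal K\subset\mathbb R^n$ be convex and compact with $\mathbf 0\in\mathcal K\subseteq R\mathcal B$, where $\mathcal B$ is the closed origin-centered unit Euclidean ball and $R>0$. There are $T$ rounds with an arbitrary sequence of functions $f_1,\dots,f_T,g_1,\dots,g_T:\mathbb R^n\to\mathbb R$, each convex on $R\mathcal B$, such that every subgradient of every $f_t$ (resp. $g_t$) at points of $R\mathcal B$ has Euclidean norm at most $G_f$ (resp. $G_g$). Write $g_t^+(\mathbf x)=\max\{g_t(\mathbf x),0\}$. At the end of round $t$ the functions $f_t,g_t$ are revealed to the algorithm. For a block size $K$ (a positive integer dividing $T$) let $m(t)=\lceil t/K\rceil$ and $\mathcal T_m=\{(m-1)K+1,\dots,mK\}$ for $m\in[T/K]$. Linear optimization oracle (LOO) of a convex compact set $S$: given $\mathbf c\in\mathbb R^n$, returns some point of $\arg\min_{\mathbf x\in S}\mathbf c^\top\mathbf x$. Procedure FW$(\mathbf x_1,\mathbf y,\epsilon;S)$ with $\mathbf x_1\in S$: for $i=1,2,\dots$: call the LOO of $S$ to get $\mathbf v_i\in\arg\min_{\mathbf x\in S}(\mathbf x_i-\mathbf y)^\top\mathbf x$; if $(\mathbf x_i-\mathbf y)^\top(\mathbf x_i-\mathbf v_i)\le\epsilon$ or $\|\mathbf x_i-\mathbf y\|^2\le 3\epsilon$, return $\mathbf x_i$; otherwise let $\sigma_i\in\arg\min_{\sigma\in[0,1]}\|\mathbf y-\mathbf x_i-\sigma(\mathbf v_i-\mathbf x_i)\|^2$ and $\mathbf x_{i+1}=\mathbf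 x_i+\sigma_i(\mathbf v_i-\mathbf x_i)$. Procedure $\mathcal O_{AFP}(\mathbf y_1,\mathbf x_0,\epsilon,S)$ with $\mathbf x_0\in S$: if $\|\mathbf x_0-\mathbf y_1\|^2\le3\epsilon$ return $(\mathbf x_0,\mathbf y_1)$. Otherwise for $i=1,2,\dots$: $\mathbf x_i=$FW$(\mathbf x_{i-1},\mathbf y_i,\epsilon;S)$; if $\|\mathbf x_i-\mathbf y_i\|^2>3\epsilon$ set $\mathbf y_{i+1}=\mathbf y_i-\frac23(\mathbf y_i-\mathbf x_i)$, else return $(\mathbf x_i,\mathbf y_i)$. Algorithm DPP (parameters $T,K,\epsilon,\delta,\alpha>0$): set $\mathbf x_1=\widetilde{\mathbf y}_1$ to an arbitrary point of $\mathcal K$. For $m=1,\dots,T/K$: for each $t\in\mathcal T_m$, play $\mathbf x_m$, observe $f_t,g_t$, and pick $\nabla_t\in\partial f_t(\widetilde{\mathbf y}_m)$. Then set $\bar\nabla_m=\frac1K\sum_{t\in\mathcal T_m}\nabla_t$, $G_m^+(\mathbf x)=\delta\sum_{t\in\mathcal T_m}g_t^+(\mathbf x)$, $\mathbf y_{m+1}=\arg\min_{\mathbf x\in R\mathcal B}\{h_m(\mathbf x):=\bar\nabla_m^\top(\mathbf x-\widetilde{\mathbf y}_m)+G_m^+(\mathbf x)+\frac\alpha2\|\mathbf x-\widetilde{\mathbf y}_m\|^2\}$, and $(\mathbf x_{m+1},\widetilde{\mathbf y}_{m+1})=\mathcal O_{AFP}(\mathbf y_{m+1},\mathbf x_m,\epsilon,\mathcal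 K)$. On round $t$ the played point is $\mathbf x_{m(t)}$. *)

From HB Require Import structures.
From mathcomp Require Import all_boot all_order all_algebra.
From mathcomp Require Import all_classical all_reals topology normedtype.
Import numFieldNormedType.Exports.
Set Implicit Arguments. Unset Strict Implicit. Unset Printing Implicit Defensive.
Import Order.TTheory GRing.Theory Num.Theory.
Local Open Scope ring_scope.
Local Open Scope classical_set_scope.

Section DPP.
Variables (R : realType) (n : nat).
Notation vec := 'rV[R]_n.

Definition dot (u v : vec) : R := \sum_(i < n) u 0 i * v 0 i.
Definition norm2 (u : vec) : R := dot u u.
Definition enorm (u : vec) : R := Num.sqrt (norm2 u).

Definition eball (r : R) : set vec := [set x | enorm x <= r].

Definition convex_set (S : set vec) : Prop :=
  forall x y l, S x -> S y -> 0 <= l <= 1 -> S (l *: x + (1 - l) *: y).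

Definition convex_on (S : set vec) (f : vec -> R) : Prop :=
  forall x y l, S x -> S y -> 0 <= l <= 1 ->
    f (l *: x + (1 - l) *: y) <= l * f x + (1 - l) * f y.

Definition subgrad (f : vec -> R) (x g : vec) : Prop :=
  forall z, f x + dot g (z - x) <= f z.

Definition pos_part (f : vec -> R) (x : vec) : R := Num.max (f x) 0.

(* m(t) = ceil(t/K) for t >= 1 *)
Definition blk (K t : nat) : nat := (t.-1 %/ K).+1.

(* Linear optimization oracle: v is some point of argmin_{x in S} c^T x *)
Definition LOO (S : set vec) (c v : vec) : Prop :=
  S v /\ forall w, S w -> dot c v <= dot c w.

(* FW_run S y eps x1 xr : procedure FW(x1, y, eps; S) can return xr *)
Inductive FW_run (S : set vec) (y : vec) (eps : R) : vec -> vec -> Prop :=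
| FW_stop x v : LOO S (x - y) v ->
    (dot (x - y) (x - v) <= eps \/ norm2 (x - y) <= 3 * eps) ->
    FW_run S y eps x x
| FW_step x v sigma xr : LOO S (x - y) v ->
    ~ (dot (x - y) (x - v) <= eps \/ norm2 (x - y) <= 3 * eps) ->
    0 <= sigma <= 1 ->
    (forall s, 0 <= s <= 1 ->
       norm2 (y - x - sigma *: (v - x)) <= norm2 (y - x - s *: (v - x))) ->
    FW_run S y eps (x + sigma *: (v - x)) xr ->
    FW_run S y eps x xr.

(* main loop of O_AFP: current y_i, previous x_{i-1}, returned pair *)
Inductive AFP_loop (S : set vec) (eps : R) : vec -> vec -> vec * vec -> Prop :=
| AFP_stop y xprev xi : FW_run S y eps xprev xi ->
    norm2 (xi - y) <= 3 * eps -> AFP_loop S eps y xprev (xi, y)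
| AFP_step y xprev xi out : FW_run S y eps xprev xi ->
    3 * eps < norm2 (xi - y) ->
    AFP_loop S eps (y - (2 / 3) *: (y - xi)) xi out ->
    AFP_loop S eps y xprev out.

(* O_AFP(y1, x0, eps, S) can return the pair out *)
Definition AFP_out (S : set vec) (eps : R) (y1 x0 : vec) (out : vec * vec) : Prop :=
  (norm2 (x0 - y1) <= 3 * eps /\ out = (x0, y1)) \/
  (3 * eps < norm2 (x0 - y1) /\ AFP_loop S eps y1 x0 out).

Definition h_blk (K : nat) (delta alpha : R) (g : nat -> vec -> R)
  (nab : nat -> vec) (ytil : vec) (m : nat) (x : vec) : R :=
  dot ((K%:R)^-1 *: \sum_((m.-1 * K).+1 <= t < (m * K).+1) nab t) (x - ytil)
  + delta * \sum_((m.-1 * K).+1 <= t < (m * K).+1) pos_part (g t) x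
  + alpha / 2 * norm2 (x - ytil).

(* (x, ytil, y, nab) is a possible run of Algorithm DPP with parameters
   T, K, eps, delta, alpha on the sequences f, g.  x m = x_m (played point of
   block m), ytil m = ytil_m, y m = y_m, nab t = chosen subgradient at round t. *)
Definition DPP_run (Kset : set vec) (Rr : R) (T K : nat) (eps delta alpha : R)
  (f g : nat -> vec -> R) (x ytil y nab : nat -> vec) : Prop :=
  [/\ x 1%N = ytil 1%N, Kset (x 1%N),
      (forall t, (1 <= t <= T)%N -> subgrad (f t) (ytil (blk K t)) (nab t)),
      (forall m, (1 <= m <= T %/ K)%N ->
         eball Rr (y m.+1) /\
         forall z, eball Rr z ->
           h_blk K delta alpha g nab (ytil m) m (y m.+1)
           <= h_blk K delta alpha g nab (ytil m) m z) &
      (forall m, (1 <= m <= T %/ K)%N ->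
         AFP_out Kset eps (y m.+1) (x m) (x m.+1, ytil m.+1))].

End DPP.

From HB Require Import structures.
From mathcomp Require Import all_boot all_order all_algebra.
From mathcomp Require Import all_classical all_reals topology normedtype.
From mathcomp Require Import ring lra zify.
Import numFieldNormedType.Exports.
Set Implicit Arguments. Unset Strict Implicit. Unset Printing Implicit Defensive.
Import Order.TTheory GRing.Theory Num.Theory.
Local Open Scope ring_scope.
Local Open Scope classical_set_scope.

(* Fix a feasible comparator [z] and put [D_m = |z - ytil_m|^2].  In block [m] the point
   [y_(m+1)] minimises the [alpha]-strongly convex function [h_m] over the ball, so
   [h_m(y_(m+1)) + alpha/2 |z - y_(m+1)|^2 <= h_m(z)], where the constraint part of [h_m(z)]
   vanishes; and every averaging step of [O_AFP] moves towards all of [K], so that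
   [D_(m+1) <= |z - y_(m+1)|^2].  With the subgradient inequality and Young's inequality
   this bounds the regret of block [m] by [K G_f^2/(2 alpha) + K alpha/2 (D_m - D_(m+1))],
   and its constraint violation similarly.  These bounds telescope over the blocks
   contained in [[s, e]], and the fewer than [2 K] remaining rounds are bounded through
   the Lipschitz constants. *)

Section InnerProduct.
Variables (R : realType) (n : nat).
Implicit Types (u v w : 'rV[R]_n) (a r : R).

Lemma dotC u v : dot u v = dot v u.
Proof. by apply: eq_bigr => i _; rewrite mulrC. Qed.

Lemma dotDl u v w : dot (u + v) w = dot u w + dot v w.
Proof. by rewrite /dot -big_split; apply: eq_bigr => i _; rewrite mxE mulrDl. Qed.

Lemma dotZl a u v : dot (a *: u) v = a * dot u v.
Proof. by rewrite /dot mulr_sumr; apply: eq_bigr => i _; rewrite mxE mulrA. Qed.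

Lemma dotNl u v : dot (- u) v = - dot u v.
Proof. by rewrite -scaleN1r dotZl mulN1r. Qed.

Lemma dotDr u v w : dot u (v + w) = dot u v + dot u w.
Proof. by rewrite dotC dotDl !(dotC u). Qed.

Lemma dotZr a u v : dot u (a *: v) = a * dot u v.
Proof. by rewrite dotC dotZl dotC. Qed.

Lemma dotNr u v : dot u (- v) = - dot u v.
Proof. by rewrite dotC dotNl dotC. Qed.

Lemma dotBr u v w : dot u (v - w) = dot u v - dot u w.
Proof. by rewrite dotDr dotNr. Qed.

Lemma dot0l v : dot 0 v = 0.
Proof. by rewrite /dot big1 // => i _; rewrite mxE mul0r. Qed.

Lemma dot_suml (I : Type) (r : seq I) (P : pred I) (F : I -> 'rV[R]_n) v :
  dot (\sum_(i <- r | P i) F i) v = \sum_(i <- r | P i) dot (F i) v.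
Proof.
elim/big_rec2: _ => [|i y1 y2 _ <-]; first by rewrite dot0l.
by rewrite dotDl.
Qed.

Lemma norm2_ge0 u : 0 <= norm2 u.
Proof. by apply: sumr_ge0 => i _; rewrite -expr2 sqr_ge0. Qed.

Lemma norm2_eq0 u : norm2 u = 0 -> u = 0.
Proof.
move=> u0; apply/rowP => i; rewrite !mxE; apply/eqP; rewrite -sqrf_eq0 expr2.
by apply/eqP; apply: (psumr_eq0P _ u0) => // j _; rewrite -expr2 sqr_ge0.
Qed.

Lemma norm2D u v : norm2 (u + v) = norm2 u + 2 * dot u v + norm2 v.
Proof. by rewrite /norm2 !dotDl !dotDr (dotC v u); ring. Qed.

Lemma norm2B u v : norm2 (u - v) = norm2 u - 2 * dot u v + norm2 v.
Proof. by rewrite /norm2 dotDl dotNl !dotDr !dotNr (dotC v u); ring. Qed.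

Lemma norm2Z a u : norm2 (a *: u) = a ^+ 2 * norm2 u.
Proof. by rewrite /norm2 dotZl dotZr mulrA expr2. Qed.

Lemma norm2_subC u v : norm2 (u - v) = norm2 (v - u).
Proof. by rewrite -opprB /norm2 dotNl dotNr opprK. Qed.

Lemma dot_le_young u v c : 0 < c ->
  dot u v <= norm2 u / (2 * c) + c / 2 * norm2 v.
Proof.
move=> c_gt0; have := norm2_ge0 (u - c *: v).
rewrite norm2B norm2Z dotZr => sq_ge0.
rewrite -(ler_pM2r (_ : 0 < 2 * c)); last by rewrite mulr_gt0.
have -> : (norm2 u / (2 * c) + c / 2 * norm2 v) * (2 * c)
          = norm2 u + c ^+ 2 * norm2 v by field; rewrite gt_eqF.
lra.
Qed.

Lemma dot_le_mul u v (A B : R) : 0 <= A -> 0 <= B ->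
  norm2 u <= A ^+ 2 -> norm2 v <= B ^+ 2 -> dot u v <= A * B.
Proof.
move=> A_ge0 B_ge0 hu hv.
have norm2_le0 w : norm2 w <= 0 ^+ 2 -> w = 0.
  by rewrite expr2 mul0r => w0; apply: norm2_eq0; apply/le_anti; rewrite w0 norm2_ge0.
have [A0|A_neq0] := eqVneq A 0.
  by move: hu; rewrite A0 => /norm2_le0 ->; rewrite dot0l mul0r.
have [B0|B_neq0] := eqVneq B 0.
  by move: hv; rewrite B0 => /norm2_le0 ->; rewrite dotC dot0l mulr0.
have A_gt0 : 0 < A by rewrite lt_def A_neq0.
have B_gt0 : 0 < B by rewrite lt_def B_neq0.
apply: le_trans (dot_le_young u v (divr_gt0 A_gt0 B_gt0)) _.
have -> : A * B = A ^+ 2 / (2 * (A / B)) + A / B / 2 * B ^+ 2.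
  by field; rewrite A_neq0 B_neq0.
apply: lerD; [apply: ler_wpM2r | apply: ler_wpM2l] => //.
  by rewrite invr_ge0 mulr_ge0 // divr_ge0.
by rewrite !divr_ge0.
Qed.

Lemma eballP r u : 0 <= r -> eball r u <-> norm2 u <= r ^+ 2.
Proof.
move=> r_ge0; rewrite /eball /enorm /=.
by rewrite -(ler_sqrt (norm2 u) (b := r ^+ 2)) ?sqr_ge0 // sqrtr_sqr ger0_norm.
Qed.

Lemma eball0 r : 0 <= r -> eball r (0 : 'rV[R]_n).
Proof. by move=> r_ge0; apply/eballP => //; rewrite /norm2 dot0l sqr_ge0. Qed.

Lemma enorm_le_sqr u G : enorm u <= G -> 0 <= G /\ norm2 u <= G ^+ 2.
Proof.
move=> uG; have G_ge0 : 0 <= G by apply: le_trans uG; apply: sqrtr_ge0.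
by split => //; move: uG; rewrite -(eballP _ G_ge0).
Qed.

Lemma norm2_convex u v l : 0 <= l <= 1 ->
  norm2 (l *: u + (1 - l) *: v) <= l * norm2 u + (1 - l) * norm2 v.
Proof.
move=> /andP[l_ge0 l_le1]; have l'_ge0 : 0 <= 1 - l by rewrite subr_ge0.
have := mulr_ge0 (mulr_ge0 l_ge0 l'_ge0) (norm2_ge0 (u - v)).
rewrite norm2B norm2D !norm2Z !dotZl !dotZr => h.
lra.
Qed.

Lemma eball_convex r : 0 <= r -> convex_set (@eball R n r).
Proof.
move=> r_ge0 u v l /(eballP _ r_ge0) hu /(eballP _ r_ge0) hv /[dup] hl /andP[l0 l1].
apply/(eballP _ r_ge0); apply: le_trans (norm2_convex u v hl) _.
have l'_ge0 : 0 <= 1 - l by rewrite subr_ge0.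
have := ler_wpM2l l0 hu; have := ler_wpM2l l'_ge0 hv; lra.
Qed.

Lemma norm2_sub_eball r u v : 0 <= r -> eball r u -> eball r v ->
  norm2 (u - v) <= (2 * r) ^+ 2.
Proof.
move=> r_ge0 /(eballP _ r_ge0) hu /(eballP _ r_ge0) hv.
have hv' : norm2 (- v) <= r ^+ 2 by rewrite -sub0r norm2_subC subr0.
have := dot_le_mul r_ge0 r_ge0 hu hv'; rewrite dotNr => h.
rewrite norm2B !expr2 in hu hv *; lra.
Qed.

End InnerProduct.

Section ProjectionFree.
Variables (R : realType) (n : nat) (S : set 'rV[R]_n) (eps : R).
Hypothesis S_convex : convex_set S.
Implicit Types (a d x y z : 'rV[R]_n).

Lemma FW_runP y x xr : FW_run S y eps x xr -> S x ->
  S xr /\ (norm2 (xr - y) <= 3 * eps \/ forall z, S z -> dot (xr - y) (xr - z) <= eps).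
Proof.
elim=> {x xr} [x v [_ v_min] stop Sx | x v sigma xr [Sv _] _ sigma01 _ _ IH Sx].
  split => //; case: stop => [gap|]; last by left.
  by right => z Sz; apply: le_trans gap; rewrite !dotBr lerD2l lerN2 v_min.
apply: IH; have -> : x + sigma *: (v - x) = sigma *: v + (1 - sigma) *: x.
  by apply/rowP => i; rewrite !mxE; ring.
exact: S_convex.
Qed.

(* With [a = z - y] and [d = x - y]: an averaging step [y := y + 2/3 (x - y)] of
   [O_AFP] does not move [y] away from [z], because the Frank-Wolfe gap at the
   returned [x] is at most [eps] while [|x - y|^2 > 3 eps]. *)
Lemma norm2_sub_two_thirds_le a d : dot d (d - a) <= eps -> 3 * eps < norm2 d ->
  norm2 (a - (2 / 3) *: d) <= norm2 a.
Proof.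
rewrite norm2B dotZr norm2Z dotBr (dotC a d) /norm2 => gap far.
have -> : (2 / 3 : R) ^+ 2 = 4 / 9 by rewrite expr2; field.
have := norm2_ge0 d; rewrite /norm2; lra.
Qed.

Lemma AFP_loopP r y xprev out : S `<=` eball r -> 0 <= r ->
  AFP_loop S eps y xprev out -> S xprev -> eball r y ->
  [/\ S out.1, eball r out.2 & forall z, S z -> norm2 (z - out.2) <= norm2 (z - y)].
Proof.
move=> S_ball r_ge0.
elim=> {y xprev out} [y xprev xi fw _ Sx By | y xprev xi out fw far _ IH Sx By].
  by have [Sxi _] := FW_runP fw Sx; split => // z _.
have [Sxi [near|gap]] := FW_runP fw Sx; first by move: near; rewrite leNgt far.
have By' : eball r (y - (2 / 3) *: (y - xi)).
  have -> : y - (2 / 3) *: (y - xi) = (1 / 3 : R) *: y + (1 - 1 / 3) *: xi.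
    by apply/rowP => i; rewrite !mxE; field.
  by apply: eball_convex => //; [exact: S_ball | apply/andP; split; lra].
have [out1 out2 closer] := IH Sxi By'; split => // z Sz.
apply: le_trans (closer z Sz) _.
have -> : z - (y - (2 / 3) *: (y - xi)) = (z - y) - (2 / 3) *: (xi - y).
  by apply/rowP => i; rewrite !mxE; ring.
apply: norm2_sub_two_thirds_le => //.
rewrite (_ : xi - y - (z - y) = xi - z); first exact: gap.
by apply/rowP => i; rewrite !mxE; ring.
Qed.

Lemma AFP_outP r y x0 out : S `<=` eball r -> 0 <= r ->
  AFP_out S eps y x0 out -> S x0 -> eball r y ->
  [/\ S out.1, eball r out.2 & forall z, S z -> norm2 (z - out.2) <= norm2 (z - y)].
Proof.
move=> S_ball r_ge0 [[_ ->]|[_ loop]] Sx By; first by split.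
exact: AFP_loopP loop Sx By.
Qed.

End ProjectionFree.

Section ConvexFunctions.
Variables (R : realType) (n : nat).
Implicit Types (S : set 'rV[R]_n) (h : 'rV[R]_n -> R).

Lemma pos_part_ge0 h u : 0 <= pos_part h u.
Proof. by rewrite /pos_part le_max lexx orbT. Qed.

Lemma pos_part_eq0 h u : h u <= 0 -> pos_part h u = 0.
Proof. by move=> hu0; rewrite /pos_part max_r. Qed.

Lemma pos_part_le_add h u v (B : R) : 0 <= B -> h u <= h v + B ->
  pos_part h u <= pos_part h v + B.
Proof.
move=> B_ge0 huv; rewrite /pos_part ge_max; apply/andP; split.
  by apply: le_trans huv _; rewrite lerD2r le_max lexx.
by apply: addr_ge0 => //; rewrite le_max lexx orbT.
Qed.

Lemma convex_on_pos_part S h : convex_on S h -> convex_on S (pos_part h).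
Proof.
move=> h_cvx u v l Su Sv /[dup] l01 /andP[l0 l1]; have := h_cvx u v l Su Sv l01.
have l'_ge0 : 0 <= 1 - l by rewrite subr_ge0.
rewrite /pos_part ge_max => hle; apply/andP; split.
  by apply: le_trans hle _; apply: lerD; apply: ler_wpM2l; rewrite ?le_max ?lexx.
by apply: addr_ge0; apply: mulr_ge0; rewrite ?le_max ?lexx ?orbT.
Qed.

Lemma convex_on_scaled_sum S (I : eqType) (r : seq I) (P : pred I)
    (F : I -> 'rV[R]_n -> R) (a : R) :
  0 <= a -> (forall i, i \in r -> P i -> convex_on S (F i)) ->
  convex_on S (fun w => a * \sum_(i <- r | P i) F i w).
Proof.
move=> a_ge0 F_cvx u v l Su Sv l01.
rewrite mulrCA [(1 - l) * _]mulrCA -mulrDr; apply: ler_wpM2l => //.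
rewrite !mulr_sumr -big_split /= big_seq_cond [in X in _ <= X]big_seq_cond.
by apply: ler_sum => i /andP[ir Pi]; apply: F_cvx.
Qed.

Lemma subgrad_sub_le h u v gr (G r : R) : subgrad h u gr ->
  0 <= G -> norm2 gr <= G ^+ 2 -> 0 <= r -> eball r u -> eball r v ->
  h u - h v <= 2 * r * G.
Proof.
move=> sub G_ge0 grG r_ge0 Bu Bv; have := sub v.
have := dot_le_mul G_ge0 (mulr_ge0 (ler0n _ 2) r_ge0) grG (norm2_sub_eball r_ge0 Bu Bv).
rewrite -opprB dotNr; lra.
Qed.

Lemma ge0_of_quadratic_lower (Y C : R) : 0 <= C ->
  (forall l, 0 < l <= 1 -> 0 <= l * Y + l ^+ 2 * C) -> 0 <= Y.
Proof.
move=> C_ge0 H; rewrite leNgt; apply/negP => Y_lt0.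
have CY : 0 < C - Y by lra.
set l := - Y / (C - Y).
have l_gt0 : 0 < l by apply: divr_gt0; lra.
have l_le1 : l <= 1 by rewrite /l ler_pdivrMr //; lra.
have := H l; rewrite l_gt0 l_le1 => /(_ isT).
have -> : l * Y + l ^+ 2 * C = - l * (Y ^+ 2 / (C - Y)).
  by rewrite /l; field; rewrite gt_eqF.
rewrite mulNr oppr_ge0 pmulr_rle0 // => sq_le0.
have : 0 < Y ^+ 2 / (C - Y) by rewrite divr_gt0 // exprn_even_gt0 //= lt_eqF.
lra.
Qed.

(* Compare the minimiser [y] with the points [l z + (1 - l) y] of the segment and
   let [l] tend to [0]. *)
Lemma prox_min_gap r alpha (H : 'rV[R]_n -> R) (d yt y z : 'rV[R]_n) :
  0 <= r -> 0 < alpha -> convex_on (eball r) H -> eball r y -> eball r z ->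
  (forall w, eball r w ->
     dot d (y - yt) + H y + alpha / 2 * norm2 (y - yt)
     <= dot d (w - yt) + H w + alpha / 2 * norm2 (w - yt)) ->
  dot d (y - yt) + H y + alpha / 2 * norm2 (y - yt) + alpha / 2 * norm2 (z - y)
  <= dot d (z - yt) + H z + alpha / 2 * norm2 (z - yt).
Proof.
move=> r_ge0 alpha_gt0 H_cvx By Bz y_min.
have -> : z - yt = (y - yt) + (z - y) by apply/rowP => i; rewrite !mxE; ring.
rewrite (dotDr d (y - yt)) (norm2D (y - yt)).
set Ny := norm2 (y - yt); set X := dot (y - yt) (z - y); set M := norm2 (z - y).
suff : 0 <= dot d (z - y) + H z - H y + alpha * X by lra.
apply: (@ge0_of_quadratic_lower _ (alpha / 2 * M)).
  by rewrite mulr_ge0 ?divr_ge0 ?norm2_ge0 // ltW.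
move=> l /andP[l_gt0 l_le1]; have l01 : 0 <= l <= 1 by rewrite ltW.
set w := l *: z + (1 - l) *: y.
have Hw_le : H w <= l * H z + (1 - l) * H y := H_cvx _ _ _ Bz By l01.
move: (y_min w (eball_convex r_ge0 Bz By l01)).
have -> : w - yt = (y - yt) + l *: (z - y) by apply/rowP => i; rewrite !mxE; ring.
rewrite (dotDr d (y - yt)) (norm2D (y - yt)) !dotZr norm2Z -/Ny -/X -/M.
lra.
Qed.

End ConvexFunctions.

Lemma blk_block K m t : (1 <= m)%N -> ((m.-1 * K).+1 <= t < (m * K).+1)%N ->
  blk K t = m.
Proof.
case: m => [//|q] _; rewrite /blk /= mulSn => ht.
have -> : t.-1 = (q * K + (t.-1 - q * K))%N by lia.
rewrite divnMDl; last by lia.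
by rewrite divn_small //; lia.
Qed.

Lemma blk_range K T t : (1 <= t <= T)%N -> (1 <= blk K t <= (T %/ K).+1)%N.
Proof.
case/andP=> _ tT; rewrite /blk ltnS /=; apply: leq_div2r.
exact: leq_trans (leq_pred t) tT.
Qed.

Lemma block_start_in K s : (0 < K)%N -> (1 <= s)%N ->
  exists j, (s <= (j * K).+1 <= s + K.-1)%N.
Proof.
move=> K_gt0 s_ge1; exists ((s.-1 + K.-1) %/ K)%N.
have := leq_divM (s.-1 + K.-1)%N K; have := ltn_ceil (s.-1 + K.-1)%N K_gt0.
by rewrite mulSn; lia.
Qed.

Lemma block_size K m : (1 <= m)%N -> ((m * K).+1 - (m.-1 * K).+1)%N = K.
Proof. by case: m => //= q _; rewrite mulSn; lia. Qed.

Section BlockSums.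
Variable R : realType.
Implicit Types (F D : nat -> R) (A B C Dmax : R).

Lemma sum_blk_block (F : nat -> nat -> R) K m : (1 <= m)%N ->
  \sum_((m.-1 * K).+1 <= t < (m * K).+1) F t (blk K t)
  = \sum_((m.-1 * K).+1 <= t < (m * K).+1) F t m.
Proof. by move=> m_ge1; apply: eq_big_nat => t ht; rewrite (blk_block m_ge1 ht). Qed.

Lemma sum_le_card F a b k C : 0 <= C -> (b - a <= k)%N ->
  (forall t, (a <= t < b)%N -> F t <= C) -> \sum_(a <= t < b) F t <= k%:R * C.
Proof.
move=> C_ge0 ba_k FC; apply: le_trans (ler_sum_nat FC) _.
by rewrite sumr_const_nat -[C *+ _]mulr_natl; apply: ler_wpM2r; rewrite // ler_nat.
Qed.

Lemma telescope_le F D A B Dmax a N : 0 <= B -> D a <= Dmax -> 0 <= D (a + N)%N ->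
  (forall m, (a <= m < a + N)%N -> F m <= A + B * (D m - D m.+1)) ->
  \sum_(a <= m < a + N) F m <= N%:R * A + B * Dmax.
Proof.
move=> B_ge0 Da DaN FD; apply: le_trans (ler_sum_nat FD) _.
rewrite big_split /= sumr_const_nat addKn -[A *+ _]mulr_natl -mulr_sumr lerD2l.
rewrite (eq_bigr (fun m => - (D m.+1 - D m))) => [|m _]; last by rewrite opprB.
rewrite sumrN telescope_sumr ?leq_addr //.
by apply: ler_wpM2l => //; lra.
Qed.

Lemma sum_nat_blocks F K j N :
  \sum_((j * K).+1 <= t < ((j + N) * K).+1) F t =
  \sum_(j.+1 <= m < (j + N).+1) \sum_((m.-1 * K).+1 <= t < (m * K).+1) F t.
Proof.
elim: N => [|N IH]; first by rewrite addn0 !big_geq.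
rewrite addnS [RHS]big_nat_recr /=; last by lia.
rewrite -IH (big_cat_nat _ (n := ((j + N) * K).+1)) //;
  by rewrite ltnS leq_mul2r; apply/orP; right; lia.
Qed.

Lemma sum_full_blocks_le F D A B Dmax K j N : 0 <= B ->
  D j.+1 <= Dmax -> 0 <= D (j + N).+1 ->
  (forall m, (j < m <= j + N)%N ->
     \sum_((m.-1 * K).+1 <= t < (m * K).+1) F t <= A + B * (D m - D m.+1)) ->
  \sum_((j * K).+1 <= t < ((j + N) * K).+1) F t <= N%:R * A + B * Dmax.
Proof.
move=> B_ge0 Dj DjN FD; rewrite sum_nat_blocks -addSn.
apply: (telescope_le (D := D)) => // m hm; apply: FD; lia.
Qed.

(* The rounds [s..e] consist of at most [T/K] complete blocks, on which the block
   bounds telescope, and two incomplete ones of fewer than [K] rounds each. *)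
Lemma sum_interval_le F D Cp A B Dmax (T K s e : nat) :
  (0 < K)%N -> (1 <= s <= e)%N -> (e <= T)%N ->
  0 <= Cp -> 0 <= A -> 0 <= B ->
  (forall m, (1 <= m <= (T %/ K).+1)%N -> 0 <= D m <= Dmax) ->
  (forall t, (s <= t <= e)%N -> F t <= Cp) ->
  (forall m, (1 <= m <= T %/ K)%N -> (s <= (m.-1 * K).+1)%N -> (m * K <= e)%N ->
     \sum_((m.-1 * K).+1 <= t < (m * K).+1) F t <= A + B * (D m - D m.+1)) ->
  \sum_(s <= t < e.+1) F t <= (2 * K)%:R * Cp + T%:R / K%:R * A + B * Dmax.
Proof.
move=> K_gt0 /andP[s_ge1 se] eT Cp_ge0 A_ge0 B_ge0 D_bd F_le F_block.
have Dmax_ge0 : 0 <= Dmax.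
  by have /andP[] := D_bd 1%N (ltac:(by rewrite ltnS leq0n)); apply: le_trans.
have K_gt0' : 0 < (K%:R : R) by rewrite ltr0n.
have KK : (2 * K)%:R * Cp = K%:R * Cp + K%:R * Cp :> R by rewrite mul2n -addnn natrD mulrDl.
have rest_ge0 : 0 <= T%:R / K%:R * A + B * Dmax.
  by apply: addr_ge0; apply: mulr_ge0 => //; apply: divr_ge0; apply: ler0n.
have KCp_ge0 : 0 <= K%:R * Cp by apply: mulr_ge0 => //; apply: ler0n.
have [j0 /andP[s_le j0_le]] := @block_start_in K s K_gt0 s_ge1.
set j1 := (e %/ K)%N.
have j1_le : (j1 * K <= e)%N by apply: leq_divM.
have e_lt : (e < K + j1 * K)%N by rewrite -mulSn ltn_ceil.
have j1T : (j1 <= T %/ K)%N by apply: leq_div2r.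
clearbody j1.
have [j01|j10] := leqP j0 j1; last first.
  have : (j1.+1 * K <= j0 * K)%N by rewrite leq_mul2r j10 orbT.
  rewrite mulSn => jK; apply: le_trans (sum_le_card (k := K) Cp_ge0 _ _) _.
  - by lia.
  - by move=> t ht; apply: F_le; lia.
  by rewrite KK; lra.
have j0K_le : (j0 * K <= j1 * K)%N by rewrite leq_mul2r j01 orbT.
rewrite (big_cat_nat _ (n := (j0 * K).+1)) /=; [|lia|lia].
rewrite [X in _ + X <= _](big_cat_nat _ (n := (j1 * K).+1)) /=; [|lia|lia].
have head := @sum_le_card F s (j0 * K).+1 K Cp Cp_ge0 (ltac:(lia))
  (fun t ht => F_le t (ltac:(lia))).
have tail := @sum_le_card F (j1 * K).+1 e.+1 K Cp Cp_ge0 (ltac:(lia))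
  (fun t ht => F_le t (ltac:(lia))).
have mid := @sum_full_blocks_le F D A B Dmax K j0 (j1 - j0) B_ge0.
rewrite subnKC // in mid.
have {}mid : \sum_((j0 * K).+1 <= t < (j1 * K).+1) F t <= (j1 - j0)%:R * A + B * Dmax.
  apply: mid.
  - by have /andP[] := D_bd j0.+1 (ltac:(lia)).
  - by have /andP[] := D_bd j1.+1 (ltac:(lia)).
  move=> m hm; have mK : (j0 * K <= m.-1 * K)%N by rewrite leq_mul2r; lia.
  have mK' : (m * K <= j1 * K)%N by rewrite leq_mul2r; lia.
  by apply: F_block; lia.
have blocks_le : (j1 - j0)%:R * A <= T%:R / K%:R * A.
  apply: ler_wpM2r => //; rewrite ler_pdivlMr // -natrM ler_nat.
  have : ((j1 - j0) * K <= j1 * K)%N by rewrite leq_mul2r leq_subr orbT.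
  by lia.
by rewrite KK; lra.
Qed.

End BlockSums.

Section DPPAnalysis.
Variables (R : realType) (n : nat) (Kset : set 'rV[R]_n) (Rr Gf Gg : R)
  (T K : nat) (eps delta alpha : R) (f g : nat -> 'rV[R]_n -> R)
  (x ytil y nab : nat -> 'rV[R]_n).
Hypotheses (Rr_ge0 : 0 <= Rr) (Kset_convex : convex_set Kset)
  (Kset_ball : Kset `<=` eball Rr)
  (g_convex : forall t, (1 <= t <= T)%N -> convex_on (eball Rr) (g t))
  (g_subgrad : forall t z, (1 <= t <= T)%N -> eball Rr z ->
     exists gr, subgrad (g t) z gr)
  (Gf_bound : forall t z gr, (1 <= t <= T)%N -> eball Rr z ->
     subgrad (f t) z gr -> enorm gr <= Gf)
  (Gg_bound : forall t z gr, (1 <= t <= T)%N -> eball Rr z ->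
     subgrad (g t) z gr -> enorm gr <= Gg)
  (Gf_ge0 : 0 <= Gf) (Gg_ge0 : 0 <= Gg)
  (K_gt0 : (0 < K)%N) (delta_gt0 : 0 < delta) (alpha_gt0 : 0 < alpha)
  (run : DPP_run Kset Rr T K eps delta alpha f g x ytil y nab).

Lemma DPP_iterates m : (1 <= m <= (T %/ K).+1)%N -> Kset (x m) /\ eball Rr (ytil m).
Proof.
case: run => x1 Kx1 _ y_min afp.
elim: m => [//|m IH] hm.
have [->|m_gt0] := posnP m; first by rewrite -x1; split => //; apply: Kset_ball.
have hm' : (1 <= m <= T %/ K)%N by lia.
have [Kxm _] := IH (ltac:(lia)).
have [By _] := y_min m hm'.
by have [] := AFP_outP Kset_convex Kset_ball Rr_ge0 (afp m hm') Kxm By.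
Qed.

Lemma ytil_closer m z : (1 <= m <= T %/ K)%N -> Kset z ->
  norm2 (z - ytil m.+1) <= norm2 (z - y m.+1).
Proof.
move=> hm Kz; case: run => _ _ _ y_min afp.
have [Kxm _] := DPP_iterates (ltac:(lia) : (1 <= m <= (T %/ K).+1)%N).
have [By _] := y_min m hm.
by have [_ _ ->] := AFP_outP Kset_convex Kset_ball Rr_ge0 (afp m hm) Kxm By.
Qed.

Lemma round_in_range m t : (1 <= m <= T %/ K)%N ->
  ((m.-1 * K).+1 <= t < (m * K).+1)%N -> (1 <= t <= T)%N.
Proof.
move=> hm ht; have : (m * K <= T %/ K * K)%N by rewrite leq_mul2r; lia.
by have := leq_divM T K; lia.
Qed.

Lemma nab_subgrad m t : (1 <= m <= T %/ K)%N ->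
  ((m.-1 * K).+1 <= t < (m * K).+1)%N ->
  subgrad (f t) (ytil m) (nab t) /\ norm2 (nab t) <= Gf ^+ 2.
Proof.
move=> hm ht; have tT := round_in_range hm ht.
case: run => _ _ nab_sub _ _; have := nab_sub t tT.
rewrite (@blk_block K m t (ltac:(lia)) ht) => sub; split => //.
have [_ Byt] := DPP_iterates (ltac:(lia) : (1 <= m <= (T %/ K).+1)%N).
by have [] := enorm_le_sqr (Gf_bound tT Byt sub).
Qed.

Let gbar m := (K%:R)^-1 *: \sum_((m.-1 * K).+1 <= t < (m * K).+1) nab t.

Lemma sum_dot_nab m v : (1 <= m)%N ->
  \sum_((m.-1 * K).+1 <= t < (m * K).+1) dot (nab t) v = K%:R * dot (gbar m) v.
Proof.
by move=> m_ge1; rewrite dotZl dot_suml mulrA mulfV ?mul1r // pnatr_eq0 -lt0n.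
Qed.

Lemma gbar_dot_le m v b : (1 <= m)%N ->
  (forall t, ((m.-1 * K).+1 <= t < (m * K).+1)%N -> dot (nab t) v <= b) ->
  dot (gbar m) v <= b.
Proof.
move=> m_ge1 nab_le; have K_gt0' : 0 < (K%:R : R) by rewrite ltr0n.
rewrite -(ler_pM2l K_gt0') -sum_dot_nab //; apply: le_trans (ler_sum_nat nab_le) _.
by rewrite sumr_const_nat block_size // mulr_natl.
Qed.

Lemma gbar_dot_young m v : (1 <= m <= T %/ K)%N ->
  dot (gbar m) v <= Gf ^+ 2 / (2 * alpha) + alpha / 2 * norm2 v.
Proof.
move=> hm; apply: gbar_dot_le => [|t ht]; first by lia.
apply: le_trans (dot_le_young _ _ alpha_gt0) _; rewrite lerD2r ler_pM2r.
  by have [] := nab_subgrad hm ht.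
by rewrite invr_gt0 mulr_gt0.
Qed.

Lemma gbar_dot_ball m u v : (1 <= m <= T %/ K)%N -> eball Rr u -> eball Rr v ->
  dot (gbar m) (u - v) <= 2 * Rr * Gf.
Proof.
move=> hm Bu Bv; apply: gbar_dot_le => [|t ht]; first by lia.
rewrite mulrC; apply: dot_le_mul => //; first by rewrite mulr_ge0.
  by have [] := nab_subgrad hm ht.
exact: norm2_sub_eball.
Qed.

(* Strong convexity of [h_m] at its minimiser [y_(m+1)], the vanishing of the
   constraint term at the feasible [z], and [D_(m+1) <= |z - y_(m+1)|^2]. *)
Lemma block_prox_le m z : (1 <= m <= T %/ K)%N -> Kset z ->
  (forall t, ((m.-1 * K).+1 <= t < (m * K).+1)%N -> g t z <= 0) ->
  dot (gbar m) (y m.+1 - ytil m)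
  + delta * \sum_((m.-1 * K).+1 <= t < (m * K).+1) pos_part (g t) (y m.+1)
  + alpha / 2 * norm2 (y m.+1 - ytil m) + alpha / 2 * norm2 (z - ytil m.+1)
  <= dot (gbar m) (z - ytil m) + alpha / 2 * norm2 (z - ytil m).
Proof.
move=> hm Kz gz; case: run => _ _ _ y_min _; have [By h_min] := y_min m hm.
pose H w := delta * \sum_((m.-1 * K).+1 <= t < (m * K).+1) pos_part (g t) w.
have H_cvx : convex_on (eball Rr) H.
  apply: convex_on_scaled_sum; first exact: ltW.
  move=> t; rewrite mem_index_iota => ht _.
  exact/convex_on_pos_part/g_convex/(round_in_range hm).
have := prox_min_gap Rr_ge0 alpha_gt0 H_cvx By (Kset_ball Kz) h_min.
have -> : H z = 0.
  rewrite /H big_nat_cond big1 ?mulr0 // => t /andP[ht _].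
  exact/pos_part_eq0/gz.
have a_ge0 : 0 <= alpha / 2 by rewrite divr_ge0 // ltW.
have := ler_wpM2l a_ge0 (ytil_closer hm Kz).
rewrite /H -/(gbar m); lra.
Qed.

Lemma block_regret_le m z : (1 <= m <= T %/ K)%N -> Kset z ->
  (forall t, ((m.-1 * K).+1 <= t < (m * K).+1)%N -> g t z <= 0) ->
  \sum_((m.-1 * K).+1 <= t < (m * K).+1) (f t (ytil m) - f t z)
  <= K%:R * (Gf ^+ 2 / (2 * alpha))
     + K%:R * alpha / 2 * (norm2 (z - ytil m) - norm2 (z - ytil m.+1)).
Proof.
move=> hm Kz gz.
have : \sum_((m.-1 * K).+1 <= t < (m * K).+1) (f t (ytil m) - f t z)
       <= K%:R * dot (gbar m) (ytil m - z).
  rewrite -sum_dot_nab; last by lia.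
  apply: ler_sum_nat => t ht; have [sub _] := nab_subgrad hm ht.
  by have := sub z; rewrite -opprB dotNr; lra.
move/le_trans; apply; rewrite -!mulrA -mulrDr; apply: ler_wpM2l; first exact: ler0n.
have prox := block_prox_le hm Kz gz.
have young := gbar_dot_young (ytil m - y m.+1) hm.
have P_ge0 : 0 <= delta * \sum_((m.-1 * K).+1 <= t < (m * K).+1) pos_part (g t) (y m.+1).
  by apply: mulr_ge0; [exact: ltW | apply: sumr_ge0 => t _; apply: pos_part_ge0].
move: prox young; rewrite !dotBr norm2_subC; lra.
Qed.

Lemma sum_pos_part_ytil_le m c : (1 <= m <= T %/ K)%N -> 0 < c ->
  \sum_((m.-1 * K).+1 <= t < (m * K).+1) pos_part (g t) (ytil m)
  <= \sum_((m.-1 * K).+1 <= t < (m * K).+1) pos_part (g t) (y m.+1)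
     + K%:R * (Gg ^+ 2 / (2 * c) + c / 2 * norm2 (y m.+1 - ytil m)).
Proof.
move=> hm c_gt0; have c_ge0 := ltW c_gt0.
have [_ Byt] := DPP_iterates (ltac:(lia) : (1 <= m <= (T %/ K).+1)%N).
set B := Gg ^+ 2 / (2 * c) + c / 2 * norm2 (y m.+1 - ytil m).
have -> : K%:R * B = \sum_((m.-1 * K).+1 <= t < (m * K).+1) B.
  by rewrite sumr_const_nat block_size ?mulr_natl //; lia.
rewrite -big_split /=; apply: ler_sum_nat => t ht; have tT := round_in_range hm ht.
have [gr sub] := g_subgrad tT Byt; have [_ grG] := enorm_le_sqr (Gg_bound tT Byt sub).
apply: pos_part_le_add.
  by rewrite !(addr_ge0, mulr_ge0, invr_ge0, sqr_ge0, norm2_ge0).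
have := dot_le_young gr (ytil m - y m.+1) c_gt0; rewrite norm2_subC.
have : norm2 gr / (2 * c) <= Gg ^+ 2 / (2 * c).
  by rewrite ler_pM2r // invr_gt0 mulr_gt0.
have sub_ym := sub (y m.+1); rewrite -opprB dotNr in sub_ym.
rewrite /B; lra.
Qed.

Lemma block_violation_le m z c : (1 <= m <= T %/ K)%N -> Kset z -> 0 < c ->
  (forall t, ((m.-1 * K).+1 <= t < (m * K).+1)%N -> g t z <= 0) ->
  \sum_((m.-1 * K).+1 <= t < (m * K).+1) pos_part (g t) (ytil m)
  <= K%:R * (Gg ^+ 2 / (2 * c)) + 2 * c * K%:R * Rr * Gf / alpha
     + (2 * Rr * Gf + Gf ^+ 2 / (2 * alpha)) / delta
     + (c * K%:R / 2 + alpha / (2 * delta))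
       * (norm2 (z - ytil m) - norm2 (z - ytil m.+1)).
Proof.
move=> hm Kz c_gt0 gz.
have [_ Byt] := DPP_iterates (ltac:(lia) : (1 <= m <= (T %/ K).+1)%N).
have [By _] := (let: And5 _ _ _ y_min _ := run in y_min m hm).
apply: le_trans (sum_pos_part_ytil_le hm c_gt0) _.
set P := \sum_((m.-1 * K).+1 <= t < (m * K).+1) pos_part (g t) (y m.+1).
set Ny := norm2 (y m.+1 - ytil m).
set dD := norm2 (z - ytil m) - norm2 (z - ytil m.+1).
have prox := block_prox_le hm Kz gz; rewrite -/P -/Ny in prox.
have young := gbar_dot_young (ytil m - y m.+1) hm; rewrite norm2_subC -/Ny in young.
have zyt := gbar_dot_ball hm (Kset_ball Kz) Byt.
have zym := gbar_dot_ball hm (Kset_ball Kz) By.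
have P_ge0 : 0 <= P by apply: sumr_ge0 => t _; apply: pos_part_ge0.
move: prox young zyt zym; rewrite !dotBr => prox young zyt zym.
have P_le : P <= (2 * Rr * Gf + Gf ^+ 2 / (2 * alpha)) / delta + alpha / (2 * delta) * dD.
  have -> : (2 * Rr * Gf + Gf ^+ 2 / (2 * alpha)) / delta + alpha / (2 * delta) * dD
            = (2 * Rr * Gf + Gf ^+ 2 / (2 * alpha) + alpha / 2 * dD) / delta.
    by field; rewrite !gt_eqF.
  by rewrite ler_pdivlMr // mulrC /dD; lra.
have Ny_le : Ny <= (2 * Rr * Gf + alpha / 2 * dD) * (2 / alpha).
  rewrite -ler_pdivrMr ?divr_gt0 //.
  have -> : Ny / (2 / alpha) = alpha / 2 * Ny by field; rewrite gt_eqF.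
  have : 0 <= delta * P by apply: mulr_ge0 => //; exact: ltW.
  by rewrite /dD; lra.
have cK_ge0 : 0 <= K%:R * (c / 2).
  by apply: mulr_ge0; [exact: ler0n | apply: divr_ge0; [exact: ltW | exact: ler0n]].
have := ler_wpM2l cK_ge0 Ny_le.
have -> : K%:R * (c / 2) * ((2 * Rr * Gf + alpha / 2 * dD) * (2 / alpha))
          = 2 * c * K%:R * Rr * Gf / alpha + c * K%:R / 2 * dD.
  by field; rewrite gt_eqF.
lra.
Qed.

Lemma regret_interval_le z s e : Kset z -> (forall t, (s <= t <= e)%N -> g t z <= 0) ->
  (1 <= s <= e)%N -> (e <= T)%N ->
  \sum_(s <= t < e.+1) f t (ytil (blk K t)) - \sum_(s <= t < e.+1) f t z
  <= 2 * K%:R * Rr * (2 * Gf + Rr * alpha) + Gf ^+ 2 / (2 * alpha) * T%:R.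
Proof.
move=> Kz gz se eT; rewrite -sumrB.
have K_gt0' : 0 < (K%:R : R) by rewrite ltr0n.
apply: le_trans (@sum_interval_le _ _ (fun m => norm2 (z - ytil m)) (2 * Rr * Gf)
  (K%:R * (Gf ^+ 2 / (2 * alpha))) (K%:R * alpha / 2) ((2 * Rr) ^+ 2) T K s e
  K_gt0 se eT _ _ _ _ _ _) _.
- by rewrite !mulr_ge0.
- by rewrite !(mulr_ge0, invr_ge0, sqr_ge0) // ltW.
- by rewrite !(mulr_ge0, invr_ge0) // ltW.
- move=> m hm; have [_ Byt] := DPP_iterates hm.
  by rewrite norm2_ge0 norm2_sub_eball //; exact: Kset_ball.
- move=> t ht; have tT : (1 <= t <= T)%N by lia.
  have [_ Byt] := DPP_iterates (blk_range K tT).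
  case: run => _ _ nab_sub _ _.
  have [_ nabG] := enorm_le_sqr (Gf_bound tT Byt (nab_sub t tT)).
  exact: subgrad_sub_le (nab_sub t tT) Gf_ge0 nabG Rr_ge0 Byt (Kset_ball Kz).
- move=> m hm sm me.
  rewrite (sum_blk_block (fun t k => f t (ytil k) - f t z)); last by lia.
  by apply: block_regret_le => // t ht; apply: gz; lia.
rewrite le_eqVlt; apply/orP; left; apply/eqP; rewrite natrM.
by field; rewrite !gt_eqF.
Qed.

Lemma violation_interval_le z s e c : Kset z ->
  (forall t, (s <= t <= e)%N -> g t z <= 0) ->
  (1 <= s <= e)%N -> (e <= T)%N -> 0 < c ->
  \sum_(s <= t < e.+1) pos_part (g t) (ytil (blk K t))
  <= Gg ^+ 2 / (2 * c) * T%:R + 2 * c * Rr * (Gf * T%:R / alpha + Rr * K%:R)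
     + 2 * alpha * Rr ^+ 2 / delta
     + (Gf / alpha + 4 * Rr) * (Gf * T%:R / (2 * delta * K%:R))
     + 4 * K%:R * Rr * Gg.
Proof.
move=> Kz gz se eT c_gt0.
have K_gt0' : 0 < (K%:R : R) by rewrite ltr0n.
have [c_ge0 a_ge0 d_ge0] := And3 (ltW c_gt0) (ltW alpha_gt0) (ltW delta_gt0).
apply: le_trans (@sum_interval_le _ _ (fun m => norm2 (z - ytil m)) (2 * Rr * Gg)
  (K%:R * (Gg ^+ 2 / (2 * c)) + 2 * c * K%:R * Rr * Gf / alpha
     + (2 * Rr * Gf + Gf ^+ 2 / (2 * alpha)) / delta)
  (c * K%:R / 2 + alpha / (2 * delta)) ((2 * Rr) ^+ 2) T K s e
  K_gt0 se eT _ _ _ _ _ _) _.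
- by rewrite !mulr_ge0.
- by rewrite !(addr_ge0, mulr_ge0, invr_ge0, sqr_ge0).
- by rewrite !(addr_ge0, mulr_ge0, invr_ge0).
- move=> m hm; have [_ Byt] := DPP_iterates hm.
  by rewrite norm2_ge0 norm2_sub_eball //; exact: Kset_ball.
- move=> t ht; have tT : (1 <= t <= T)%N by lia.
  have [_ Byt] := DPP_iterates (blk_range K tT).
  have [gr sub] := g_subgrad tT Byt.
  have [_ grG] := enorm_le_sqr (Gg_bound tT Byt sub).
  have := @pos_part_le_add _ _ (g t) (ytil (blk K t)) z (2 * Rr * Gg).
  rewrite (pos_part_eq0 (gz t ht)) add0r; apply; first by rewrite !mulr_ge0.
  by have := subgrad_sub_le sub Gg_ge0 grG Rr_ge0 Byt (Kset_ball Kz); lra.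
- move=> m hm sm me.
  rewrite (sum_blk_block (fun t k => pos_part (g t) (ytil k))); last by lia.
  by apply: block_violation_le => // t ht; apply: gz; lia.
rewrite le_eqVlt; apply/orP; left; apply/eqP; rewrite natrM.
by field; rewrite !gt_eqF.
Qed.

End DPPAnalysis.

Unset Implicit Arguments.

Theorem lemma2 (R : realType) (n : nat) (Kset : set 'rV[R]_n) (Rr Gf Gg : R)
  (T K : nat) (eps delta alpha : R) (f g : nat -> 'rV[R]_n -> R)
  (x ytil y nab : nat -> 'rV[R]_n) (s e : nat) :
  0 < Rr ->
  convex_set Kset -> compact Kset -> Kset 0 -> Kset `<=` eball Rr ->
  (forall t, (1 <= t <= T)%N ->
     convex_on (eball Rr) (f t) /\ convex_on (eball Rr) (g t)) ->
  (forall t z, (1 <= t <= T)%N -> eball Rr z ->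
     (exists gr, subgrad (f t) z gr) /\ (exists gr, subgrad (g t) z gr)) ->
  (forall t z gr, (1 <= t <= T)%N -> eball Rr z ->
     subgrad (f t) z gr -> enorm gr <= Gf) ->
  (forall t z gr, (1 <= t <= T)%N -> eball Rr z ->
     subgrad (g t) z gr -> enorm gr <= Gg) ->
  (0 < K)%N -> (K %| T)%N -> 0 < eps -> 0 < delta -> 0 < alpha ->
  DPP_run Kset Rr T K eps delta alpha f g x ytil y nab ->
  (1 <= s)%N -> (s < e)%N -> (e <= T)%N ->
  (exists z, Kset z /\ forall t, (s <= t <= e)%N -> g t z <= 0) ->
  (forall z, Kset z -> (forall t, (s <= t <= e)%N -> g t z <= 0) ->
     \sum_(s <= t < e.+1) f t (ytil (blk K t)) - \sum_(s <= t < e.+1) f t z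
     <= 2 * K%:R * Rr * (2 * Gf + Rr * alpha) + Gf ^+ 2 / (2 * alpha) * T%:R)
  /\
  (forall c, 0 < c ->
     \sum_(s <= t < e.+1) pos_part (g t) (ytil (blk K t))
     <= Gg ^+ 2 / (2 * c) * T%:R + 2 * c * Rr * (Gf * T%:R / alpha + Rr * K%:R)
        + 2 * alpha * Rr ^+ 2 / delta
        + (Gf / alpha + 4 * Rr) * (Gf * T%:R / (2 * delta * K%:R))
        + 4 * K%:R * Rr * Gg).
Proof.
move=> Rr_gt0 Kconv _ _ Kball fg_convex fg_subgrad Gf_bd Gg_bd K_gt0 _ _ delta_gt0
  alpha_gt0 run s_ge1 se eT [z0 [Kz0 gz0]].
have Rr_ge0 := ltW Rr_gt0.
have g_convex t tT := (fg_convex t tT).2.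
have g_subgrad t z tT Bz := (fg_subgrad t z tT Bz).2.
have se' : (1 <= s <= e)%N by rewrite s_ge1 ltnW.
have T_ge1 : (1 <= 1 <= T)%N by lia.
have ball0 : eball Rr (0 : 'rV[R]_n) by apply: eball0.
have [[grf subf] [grg subg]] := fg_subgrad 1%N 0 T_ge1 ball0.
have [Gf_ge0 _] := enorm_le_sqr (Gf_bd 1%N 0 grf T_ge1 ball0 subf).
have [Gg_ge0 _] := enorm_le_sqr (Gg_bd 1%N 0 grg T_ge1 ball0 subg).
split => [z Kz gz | c c_gt0].
  exact: (regret_interval_le Rr_ge0 Kconv Kball g_convex Gf_bd Gf_ge0 Gg_ge0 K_gt0
    delta_gt0 alpha_gt0 run Kz gz se' eT).
exact: (violation_interval_le Rr_ge0 Kconv Kball g_convex g_subgrad Gf_bd Gg_bd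
  Gf_ge0 Gg_ge0 K_gt0 delta_gt0 alpha_gt0 run Kz0 gz0 se' eT c_gt0).
Qed.
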